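(* For every integer $n\ge 2$, the $n$-abomination $\mathbb{X}_n$ has width $2^{n+2}$; that is, $\mathbb{X}_n$ contains an antichain with $2^{n+2}$ elements and every antichain in $\mathbb{X}_n$ has at most $2^{n+2}$ elements.
   Context: $\mathbb{N}=\{0,1,2,\dots\}$. Fix an integer $n\ge 2$ and put $N=2^{n+1}-1$. Let $T_n$ be the set of triples $\langle k_1,k_2,k_3\rangle$ of pairwise distinct natural numbers $\le N$, with a fixed enumeration $T_n=\{s_0,\dots,s_t\}$. Let $U_n$ be a set of pairwise distinct elements $a_m,b_m$ ($m\in\mathbb{N}$) and $c_{m,k},d_{m,k},e^a_{m,k},e^b_{m,k}$ ($m\in\mathbb{N}$, $0\le k\le N$). Define $x\prec y$ on $U_n$ iff one of: (1) $x=a_m$ and $y\in\{c_{m,k_1},c_{m,k_2}\}$, where $s_j=\langle k_1,k_2,k_3\rangle$ with $j\equiv m \bmod (t+1)$; (2) $x=b_m$ and $y\in\{c_{m,k_1},c_{m,k_3}\}$, with $s_j$ as in (1); (3) $m\ge1$, $x=c_{m,k}$, and either $y=e^a_{m-1,j}$ with $j\ne k$, or $y=e^b_{m-1,i}$ for any $i\le N$; (4) $x=d_{m,k}$ and $y=c_{m,j}$ with $j\neq k$; (5) $x=e^a_{m,k}$ and either $y=a_m$ or $y=d_{m,j}$ with $j\ne k$; (6) $x=e^b_{m,k}$ and either $y=b_m$ or $y=d_{m,j}$ with $j\ne k$. Let $\le$ be the reflexive transitive closure of $\prec$. The $n$-abomination $\mathbb{X}_n$ is the poset $U_n\cup\{\bot\}$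 where $\bot$ is a new least element, with the topology in which $U$ is open iff $\bot\notin U$ or $U$ is cofinite. A rooted poset has width $w$ if its largest antichain has exactly $w$ elements. *)

From Stdlib Require Import Arith List Relations.
Import ListNotations.

Definition bigN (n : nat) : nat := 2 ^ (S n) - 1.

Definition triple_ok (n : nat) (t : nat * nat * nat) : Prop :=
  let '(k1, k2, k3) := t in
  k1 <> k2 /\ k1 <> k3 /\ k2 <> k3 /\
  k1 <= bigN n /\ k2 <= bigN n /\ k3 <= bigN n.

Definition enumerates (n : nat) (s : list (nat * nat * nat)) : Prop :=
  NoDup s /\ forall t, In t s <-> triple_ok n t.

Definition sj (s : list (nat * nat * nat)) (m : nat) : nat * nat * nat :=
  nth (m mod length s) s (0, 0, 0).

(* Elements of X_n = U_n ∪ {⊥}: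
   A m = a_m, B m = b_m, C m k = c_{m,k}, D m k = d_{m,k},
   EA m k = e^a_{m,k}, EB m k = e^b_{m,k}. *)
Inductive elt : Type :=
| Bot : elt
| A : nat -> elt
| B : nat -> elt
| C : nat -> nat -> elt
| D : nat -> nat -> elt
| EA : nat -> nat -> elt
| EB : nat -> nat -> elt.

Definition inX (n : nat) (x : elt) : Prop :=
  match x with
  | Bot | A _ | B _ => True
  | C _ k | D _ k | EA _ k | EB _ k => k <= bigN n
  end.

Definition prec (n : nat) (s : list (nat * nat * nat)) (x y : elt) : Prop :=
  match x, y with
  | A m, C m' k =>
      let '(k1, k2, _) := sj s m in m' = m /\ (k = k1 \/ k = k2)
  | B m, C m' k =>
      let '(k1, _, k3) := sj s m in m' = m /\ (k = k1 \/ k = k3)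
  | C m k, EA m' j =>
      1 <= m /\ m' = m - 1 /\ k <= bigN n /\ j <= bigN n /\ j <> k
  | C m k, EB m' i =>
      1 <= m /\ m' = m - 1 /\ k <= bigN n /\ i <= bigN n
  | D m k, C m' j =>
      m' = m /\ k <= bigN n /\ j <= bigN n /\ j <> k
  | EA m k, A m' => m' = m /\ k <= bigN n
  | EA m k, D m' j => m' = m /\ k <= bigN n /\ j <= bigN n /\ j <> k
  | EB m k, B m' => m' = m /\ k <= bigN n
  | EB m k, D m' j => m' = m /\ k <= bigN n /\ j <= bigN n /\ j <> k
  | _, _ => False
  end.

Definition leX (n : nat) (s : list (nat * nat * nat)) (x y : elt) : Prop :=
  x = Bot \/ clos_refl_trans elt (prec n s) x y.

Definition antichain (n : nat) (s : list (nat * nat * nat)) (l : list elt) : Prop :=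
  NoDup l /\ (forall x, In x l -> inX n x) /\
  (forall x y, In x l -> In y l -> x <> y -> ~ leX n s x y).

From Stdlib Require Import Arith List Relations Lia.
Import ListNotations.

(* Every covering step lowers the grade [grade] (3m for c_{m,k}, 3m+1 for
   a_m, b_m, d_{m,k}, 3m+2 for e^a_{m,k}, e^b_{m,k}) by one, so the
   2(N+1) elements e^a_{m,k}, e^b_{m,k} of a fixed level m, which share a
   grade, form an antichain.  Conversely U_n is covered by 2(N+1) chains:
   level m of the chain (a, k) is e^a_{m,k} < a_m (k = 0) or d_{m,k-1}
   (k > 0), level m of the chain (b, k) is e^b_{m,k} < c_{m,k}, with b_m and
   d_{m,N} inserted in the middle of suitable b-chains, and the top of each
   chain at level m+1 lies below its bottom at level m.  An antichain meets
   every chain at most once, and ⊥ lies below everything. *)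

Lemma length_le_of_chain_cover {X Y : Type} (le : X -> X -> Prop)
    (chain : X -> Y) (l : list X) (r : list Y) :
  NoDup l ->
  (forall x y, In x l -> In y l -> le x y -> x = y) ->
  (forall x y, In x l -> In y l -> chain x = chain y -> le x y \/ le y x) ->
  (forall x, In x l -> In (chain x) r) ->
  length l <= length r.
Proof.
  intros Hnd Hanti Hcomp Hr.
  rewrite <- (length_map chain l).
  apply NoDup_incl_length.
  - apply NoDup_map_NoDup_ForallPairs; [|exact Hnd].
    intros x y Hx Hy Hxy.
    destruct (Hcomp x y Hx Hy Hxy) as [Hle|Hle].
    + exact (Hanti x y Hx Hy Hle).
    + symmetry; exact (Hanti y x Hy Hx Hle).
  - intros c Hc; apply in_map_iff in Hc as [x [<- Hx]]; exact (Hr x Hx).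
Qed.

Lemma NoDup_list_prod {X Y : Type} (l : list X) (l' : list Y) :
  NoDup l -> NoDup l' -> NoDup (list_prod l l').
Proof.
  intros Hl Hl'; induction Hl as [|a l Hal Hl IH]; simpl; [constructor|].
  apply NoDup_app; [|exact IH|].
  - apply NoDup_map_NoDup_ForallPairs; [|exact Hl'].
    intros y y' _ _ E; injection E; auto.
  - intros [a' y] Hy Hy'.
    apply in_map_iff in Hy as [? [E _]]; injection E as <- _.
    apply in_prod_iff in Hy' as [Ha _]; contradiction.
Qed.

Definition elt_eq_dec (x y : elt) : {x = y} + {x <> y}.
Proof. decide equality; decide equality. Defined.

Definition grade (x : elt) : nat :=
  match x with
  | Bot => 0
  | C m _ => 3 * m
  | A m | B m | D m _ => 3 * m + 1
  | EA m _ | EB m _ => 3 * m + 2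
  end.

Lemma prec_grade_lt n s x y : prec n s x y -> grade y < grade x.
Proof.
  destruct x, y; simpl; try contradiction;
    try destruct (sj s _) as [[k1 k2] k3]; lia.
Qed.

Lemma clos_rt_prec_grade n s x y :
  clos_refl_trans elt (prec n s) x y -> x = y \/ grade y < grade x.
Proof.
  induction 1 as [x y Hxy| x | x y z _ IHxy _ IHyz].
  - right; exact (prec_grade_lt n s x y Hxy).
  - left; reflexivity.
  - destruct IHxy, IHyz; subst; auto; right; lia.
Qed.

Lemma two_le_bigN n : 1 <= n -> 2 <= bigN n.
Proof.
  intros Hn; unfold bigN.
  assert (2 ^ 2 <= 2 ^ S n) by (apply Nat.pow_le_mono_r; lia).
  simpl in *; lia.
Qed.

Lemma pow2_eq_double_bigN_succ n : 2 ^ (n + 2) = 2 * S (bigN n).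
Proof.
  unfold bigN; rewrite Nat.add_comm.
  pose proof (Nat.pow_nonzero 2 (S n)).
  simpl in *; lia.
Qed.

Lemma enumerates_sj_triple_ok n s :
  2 <= bigN n -> enumerates n s -> forall m, triple_ok n (sj s m).
Proof.
  intros HN [_ Hs] m.
  assert (H012 : In (0, 1, 2) s) by (apply Hs; simpl; lia).
  apply Hs, nth_In, Nat.mod_upper_bound.
  destruct s; [contradiction | discriminate].
Qed.

Section Chains.

Variable n : nat.
Variable s : list (nat * nat * nat).
Hypothesis HN : 2 <= bigN n.
Hypothesis Htri : forall m, triple_ok n (sj s m).

Local Notation N := (bigN n).
Local Notation R := (clos_refl_trans elt (prec n s)).

(* Chain (true, k) is the a-chain through e^a_{m,k}, chain (false, k) the
   b-chain through e^b_{m,k}.  d_{m,N} has no a-chain left and joins b-chain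
   0, which is why b_m joins b-chain k1 or k3, whichever is nonzero. *)
Definition chain_of (x : elt) : bool * nat :=
  match x with
  | Bot | A _ => (true, 0)
  | B m => let '(k1, _, k3) := sj s m in (false, if k1 =? 0 then k3 else k1)
  | C _ k | EB _ k => (false, k)
  | D _ j => if j <? N then (true, S j) else (false, 0)
  | EA _ k => (true, k)
  end.

Definition level (x : elt) : nat :=
  match x with
  | Bot => 0
  | A m | B m | C m _ | D m _ | EA m _ | EB m _ => m
  end.

Definition chain_top (c : bool * nat) (m : nat) : elt :=
  match c with
  | (true, 0) => A m
  | (true, S j) => D m j
  | (false, k) => C m k
  end.

Definition chain_bot (c : bool * nat) (m : nat) : elt :=
  if fst c then EA m (snd c) else EB m (snd c).

Lemma EB_le_C m k : k <= N -> R (EB m k) (C m k).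
Proof.
  intros Hk; destruct k as [|k].
  - apply rt_trans with (D m 1); apply rt_step; simpl; lia.
  - apply rt_trans with (D m 0); apply rt_step; simpl; lia.
Qed.

Lemma chain_index_le x : inX n x -> snd (chain_of x) <= N.
Proof.
  destruct x as [| | m | m k | m j | m k | m k]; simpl; intros Hx; try lia.
  - pose proof (Htri m) as Hm; destruct (sj s m) as [[k1 k2] k3].
    destruct (k1 =? 0); simpl in *; lia.
  - destruct (Nat.ltb_spec j N); simpl; lia.
Qed.

Lemma chain_segment x : x <> Bot -> inX n x ->
  R (chain_bot (chain_of x) (level x)) x /\ R x (chain_top (chain_of x) (level x)).
Proof.
  destruct x as [| m | m | m k | m j | m k | m k]; simpl; intros Hb Hx;
    unfold chain_bot; simpl.
  - congruence.
  - split; [apply rt_step; simpl; lia | apply rt_refl].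
  - pose proof (Htri m) as Hm; destruct (sj s m) as [[k1 k2] k3] eqn:E.
    simpl in Hm; destruct (Nat.eqb_spec k1 0); simpl;
      split; apply rt_step; simpl; rewrite ?E; lia.
  - split; [apply EB_le_C; exact Hx | apply rt_refl].
  - destruct (Nat.ltb_spec j N); simpl.
    + split; [apply rt_step; simpl; lia | apply rt_refl].
    + split; apply rt_step; simpl; lia.
  - split; [apply rt_refl|].
    destruct k; apply rt_step; simpl; lia.
  - split; [apply rt_refl | apply EB_le_C; exact Hx].
Qed.

Lemma chain_of_chain_bot c m : chain_of (chain_bot c m) = c.
Proof. destruct c as [[|] k]; reflexivity. Qed.

Lemma chain_bot_le_top c m : snd c <= N -> R (chain_bot c m) (chain_top c m).
Proof.
  intros Hc.
  assert (Hb : chain_bot c m <> Bot) by (destruct c as [[|] k]; discriminate).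
  assert (Hin : inX n (chain_bot c m)) by (destruct c as [[|] k]; exact Hc).
  pose proof (proj2 (chain_segment _ Hb Hin)) as Hle.
  rewrite chain_of_chain_bot in Hle.
  destruct c as [[|] k]; exact Hle.
Qed.

(* On a-chains the step passes through some c_{m+1,j} whose index j avoids
   both the index excluded by the top and the one excluded by the bottom;
   this is where N >= 2 is needed. *)
Lemma chain_top_succ_le_bot c m : snd c <= N -> R (chain_top c (S m)) (chain_bot c m).
Proof.
  destruct c as [[|] [|j]]; simpl; intros Hc; unfold chain_bot; simpl.
  - pose proof (Htri (S m)) as Hm; destruct (sj s (S m)) as [[k1 k2] k3] eqn:E.
    simpl in Hm; destruct (Nat.eqb_spec k1 0).
    + apply rt_trans with (C (S m) k2); apply rt_step; simpl; rewrite ?E; lia.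
    + apply rt_trans with (C (S m) k1); apply rt_step; simpl; rewrite ?E; lia.
  - destruct j.
    + apply rt_trans with (C (S m) 2); apply rt_step; simpl; lia.
    + apply rt_trans with (C (S m) 0); apply rt_step; simpl; lia.
  - apply rt_step; simpl; lia.
  - apply rt_step; simpl; lia.
Qed.

Lemma chain_top_le_bot c m m' : snd c <= N -> m < m' ->
  R (chain_top c m') (chain_bot c m).
Proof.
  intros Hc Hm; induction Hm as [|m' Hm IH].
  - apply chain_top_succ_le_bot; exact Hc.
  - apply rt_trans with (chain_bot c m'); [apply chain_top_succ_le_bot; exact Hc|].
    apply rt_trans with (chain_top c m'); [apply chain_bot_le_top; exact Hc | exact IH].
Qed.

Lemma chain_interior x : x <> Bot -> inX n x ->
  x = chain_bot (chain_of x) (level x) \/ x = chain_top (chain_of x) (level x) \/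
  x = B (level x) \/ x = D (level x) N.
Proof.
  destruct x as [| m | m | m k | m j | m k | m k]; simpl; intros Hb Hx; auto.
  - congruence.
  - destruct (Nat.ltb_spec j N); simpl; auto.
    do 3 right; f_equal; lia.
Qed.

Lemma chain_of_B_neq_D m m' : chain_of (B m) <> chain_of (D m' N).
Proof.
  simpl; rewrite Nat.ltb_irrefl.
  pose proof (Htri m) as Hm; destruct (sj s m) as [[k1 k2] k3].
  simpl in Hm; destruct (Nat.eqb_spec k1 0); intros E; injection E; lia.
Qed.

Lemma same_level_comparable x y : x <> Bot -> y <> Bot -> inX n x -> inX n y ->
  chain_of x = chain_of y -> level x = level y -> R x y \/ R y x.
Proof.
  intros Hx Hy Ix Iy Hc Hl.
  pose proof (chain_segment x Hx Ix) as Sx; pose proof (chain_segment y Hy Iy) as Sy.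
  pose proof (chain_interior x Hx Ix) as Px; pose proof (chain_interior y Hy Iy) as Py.
  rewrite <- Hc, <- Hl in Sy, Py; revert Sx Sy Px Py.
  generalize (chain_of x) (level x); intros c m [Hbx Hxt] [Hby Hyt] Px Py.
  destruct Px as [-> | [-> | [-> | ->]]]; [left; exact Hby | right; exact Hyt | |];
    (destruct Py as [-> | [-> | [-> | ->]]];
      [right; exact Hbx | left; exact Hxt | ..]);
    try (left; apply rt_refl).
  - exfalso; exact (chain_of_B_neq_D _ _ Hc).
  - exfalso; exact (chain_of_B_neq_D _ _ (eq_sym Hc)).
Qed.

Lemma same_chain_comparable x y : x <> Bot -> y <> Bot -> inX n x -> inX n y ->
  chain_of x = chain_of y -> R x y \/ R y x.
Proof.
  intros Hx Hy Ix Iy Hc.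
  destruct (chain_segment x Hx Ix) as [Hbx Hxt].
  destruct (chain_segment y Hy Iy) as [Hby Hyt].
  pose proof (chain_index_le x Ix) as Hk.
  destruct (lt_eq_lt_dec (level x) (level y)) as [[Hl|Hl]|Hl].
  - right; apply rt_trans with (chain_top (chain_of y) (level y)); [exact Hyt|].
    apply rt_trans with (chain_bot (chain_of x) (level x)); [|exact Hbx].
    rewrite <- Hc; apply chain_top_le_bot; assumption.
  - apply same_level_comparable; assumption.
  - left; apply rt_trans with (chain_top (chain_of x) (level x)); [exact Hxt|].
    apply rt_trans with (chain_bot (chain_of y) (level y)); [|exact Hby].
    rewrite Hc; apply chain_top_le_bot; rewrite <- ?Hc; assumption.
Qed.

Lemma same_chain_leX x y : inX n x -> inX n y ->
  chain_of x = chain_of y -> leX n s x y \/ leX n s y x.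
Proof.
  intros Ix Iy Hc.
  destruct (elt_eq_dec x Bot) as [->|Hx]; [left; left; reflexivity|].
  destruct (elt_eq_dec y Bot) as [->|Hy]; [right; left; reflexivity|].
  destruct (same_chain_comparable x y Hx Hy Ix Iy Hc); [left|right]; right; assumption.
Qed.

Definition chain_indices : list (bool * nat) :=
  list_prod [true; false] (seq 0 (S N)).

Lemma antichain_length_le l : antichain n s l -> length l <= length chain_indices.
Proof.
  intros [Hnd [Hin Hac]].
  apply (length_le_of_chain_cover (leX n s) chain_of); [exact Hnd | | |].
  - intros x y Hx Hy Hle.
    destruct (elt_eq_dec x y) as [E|E]; [exact E|].
    exfalso; exact (Hac x y Hx Hy E Hle).
  - intros x y Hx Hy; apply same_chain_leX; auto.
  - intros x Hx; pose proof (chain_index_le x (Hin x Hx)) as Hk.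
    destruct (chain_of x) as [b k]; apply in_prod_iff; split.
    + destruct b; simpl; auto.
    + apply in_seq; simpl in *; lia.
Qed.

End Chains.

Lemma chain_bots_antichain n s m :
  antichain n s (map (fun c => chain_bot c m) (chain_indices n)).
Proof.
  assert (Hgrade : forall x, In x (map (fun c => chain_bot c m) (chain_indices n)) ->
            x <> Bot /\ inX n x /\ grade x = 3 * m + 2).
  { intros x Hx; apply in_map_iff in Hx as [[b k] [<- Hc]].
    apply in_prod_iff in Hc as [_ Hk]; apply in_seq in Hk.
    destruct b; simpl; repeat split; solve [discriminate | lia]. }
  split; [|split].
  - apply NoDup_map_NoDup_ForallPairs.
    + intros [[|] k] [[|] k'] _ _ E; unfold chain_bot in E; simpl in E; congruence.
    + apply NoDup_list_prod; [|apply seq_NoDup].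
      repeat constructor; simpl; intuition discriminate.
  - intros x Hx; apply Hgrade, Hx.
  - intros x y Hx Hy Hxy [->|Hle].
    + apply (proj1 (Hgrade Bot Hx)); reflexivity.
    + destruct (clos_rt_prec_grade n s x y Hle) as [E|Hlt]; [contradiction|].
      rewrite (proj2 (proj2 (Hgrade x Hx))), (proj2 (proj2 (Hgrade y Hy))) in Hlt.
      lia.
Qed.

Theorem mainTheorem5 :
  forall (n : nat), 2 <= n ->
  forall (s : list (nat * nat * nat)), enumerates n s ->
    (exists l : list elt, antichain n s l /\ length l = 2 ^ (n + 2)) /\
    (forall l : list elt, antichain n s l -> length l <= 2 ^ (n + 2)).
Proof.
  intros n Hn s Hs.
  assert (HN : 2 <= bigN n) by (apply two_le_bigN; lia).
  pose proof (enumerates_sj_triple_ok n s HN Hs) as Htri.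
  assert (Hcount : length (chain_indices n) = 2 ^ (n + 2)).
  { unfold chain_indices; rewrite length_prod, length_seq.
    symmetry; apply pow2_eq_double_bigN_succ. }
  split.
  - exists (map (fun c => chain_bot c 0) (chain_indices n)).
    split; [exact (chain_bots_antichain n s 0) | rewrite length_map; exact Hcount].
  - intros l Hl; rewrite <- Hcount.
    exact (antichain_length_le n s HN Htri l Hl).
Qed.
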